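(* Let $(r_n),(R_n)$ be real sequences and $(C_n),(D_n),(d_n)$ complex sequences with $\sum_n(|C_n|^2+|d_nD_n|^2)<\infty$. Assume $r_n\to\chi$ for some $\chi<0$, and that there are $n'\in\mathbb{N}$, $\mu>0$, $\nu>1/2$ with $|R_n|\le\mu n^{-\nu}(|C_n|^2+|d_nD_n|^2)^{1/2}$ for all $n\ge n'$. Then for every $\varepsilon\in(0,1)$ and $T>0$ there exists $n_0=n_0(\varepsilon)\in\mathbb{N}$, independent of $T$ and of the coefficients, such that $$\int_0^\infty k(t)\Big|\sum_{n=n_0}^\infty R_ne^{r_nt}\Big|^2dt\le\varepsilon\,\pi T\sum_{n=n_0}^\infty\frac{|C_n|^2+|d_nD_n|^2}{\pi^2+T^2r_n^2}.$$
   Context: For $T>0$, $k(t):=\sin(\pi t/T)$ for $t\in[0,T]$ and $k(t):=0$ otherwise. *)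

From Stdlib Require Export Reals.
Open Scope R_scope.

(* Complex numbers modelled as pairs (re, im) of reals. *)
Definition Cx := (R * R)%type.
Definition Cmul (z w : Cx) : Cx :=
  (fst z * fst w - snd z * snd w, fst z * snd w + snd z * fst w).
Definition Cmod2 (z : Cx) : R := fst z ^ 2 + snd z ^ 2.

Definition kern (T t : R) : R :=
  if Rle_dec 0 t then (if Rle_dec t T then sin (PI * t / T) else 0) else 0.

Definition acoef (C D d : nat -> Cx) (n : nat) : R :=
  Cmod2 (C n) + Cmod2 (Cmul (d n) (D n)).

(* Put w_n := pi^2 + T^2 r_n^2 and S(t) := sum_{n >= n0} R_n e^(r_n t).  By Cauchy-Schwarz,
   S(t)^2 <= (sum mu^2 n^(-2 nu) w_n e^(2 r_n t)) * (sum a_n / w_n).  Once n0 is so large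
   that every r_n lies in (3chi/2, chi/2), we have w_n <= pi^2 + 9/4 chi^2 T^2 and
   e^(2 r_n t) <= e^(chi t), so S(t)^2 <= mu^2 Z (pi^2 + 9/4 chi^2 T^2) B e^(chi t), where
   Z is the tail of the convergent series sum n^(-2 nu) and B the right-hand series.
   Integrating e^(chi t) against k gives pi T (e^(chi T) + 1) / (pi^2 + chi^2 T^2), which
   leaves at most 9/2 mu^2 Z pi T B; choosing n0 with Z <= 2 eps / (9 mu^2) finishes, and
   this choice depends neither on T nor on the coefficients. *)

From Stdlib Require Import Reals Lra Lia Psatz.
From Coquelicot Require Import Coquelicot.
Open Scope R_scope.

Lemma exp_le_of_le (x y : R) : x <= y -> exp x <= exp y.
Proof. intros [Hlt | ->]; [left; now apply exp_increasing | apply Rle_refl]. Qed.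

Lemma Un_cv_abs_le (u : nat -> R) (l c : R) :
  Un_cv u l -> (forall n, Rabs (u n) <= c) -> Rabs l <= c.
Proof.
  intros Hu Hb. apply (@Rle_cv_lim (fun n => Rabs (u n)) (fun _ => c) (Rabs l) c).
  - exact Hb.
  - now apply cv_cvabs.
  - intros e He. exists 0%nat. intros n _. unfold R_dist. rewrite Rminus_diag, Rabs_R0. exact He.
Qed.

Lemma nonneg_series_cv (u : nat -> R) (M : R) :
  (forall n, 0 <= u n) -> (forall N, sum_f_R0 u N <= M) ->
  {l : R | infinite_sum u l}.
Proof.
  intros Hu Hb. apply growing_cv.
  - intros n. simpl. specialize (Hu (S n)). lra.
  - exists M. intros x [N ->]. apply Hb.
Qed.

Lemma sum_shift_le (u : nat -> R) (n0 N : nat) :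
  (forall n, 0 <= u n) ->
  sum_f_R0 (fun k => u (n0 + k)%nat) N <= sum_f_R0 u (n0 + N).
Proof.
  intros Hu. induction N as [|N IH].
  - simpl. rewrite Nat.add_0_r. destruct n0 as [|m]; simpl; [lra|].
    pose proof (cond_pos_sum u m Hu). lra.
  - simpl. rewrite Nat.add_succ_r. simpl. lra.
Qed.

Lemma infinite_sum_tail_le (u : nat -> R) (L : R) (n0 N : nat) :
  infinite_sum u L -> (forall n, 0 <= u n) ->
  sum_f_R0 (fun k => u (n0 + k)%nat) N <= L.
Proof.
  intros HL Hu. eapply Rle_trans; [apply sum_shift_le, Hu|]. now apply sum_incr.
Qed.

Lemma sq_le_mul_of_le_amgm (s X Y : R) : 0 <= s -> 0 < X -> 0 <= Y ->
  (forall l, 0 < l -> s <= (l * X + Y / l) / 2) -> s ^ 2 <= X * Y.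
Proof.
  intros Hs HX HY H. destruct (Req_dec s 0) as [->|Hs0]; [nra|].
  (* the bound is sharpest at [l = s / X], where it reads [s <= X Y / s] *)
  assert (Hopt := H (s / X) ltac:(apply Rdiv_lt_0_compat; lra)).
  replace ((s / X * X + Y / (s / X)) / 2) with ((s + X * Y / s) / 2) in Hopt by (field; lra).
  assert (Hs' : s * s <= s * (X * Y / s)) by (apply Rmult_le_compat_l; lra).
  replace (s * (X * Y / s)) with (X * Y) in Hs' by (field; lra). nra.
Qed.

Lemma infinite_sum_cauchy_schwarz (u x y : nat -> R) (s X Y : R) :
  infinite_sum u s ->
  (forall k, 0 <= x k) -> (forall k, 0 <= y k) -> (forall k, u k ^ 2 <= x k * y k) ->
  (forall N, sum_f_R0 x N <= X) -> (forall N, sum_f_R0 y N <= Y) -> 0 < X ->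
  s ^ 2 <= X * Y.
Proof.
  intros Hs Hx Hy Huxy HX HY HX0.
  assert (HY0 : 0 <= Y) by (specialize (HY 0%nat); specialize (Hy 0%nat); simpl in HY; lra).
  rewrite <- pow2_abs. apply sq_le_mul_of_le_amgm; [apply Rabs_pos|lra|lra|].
  intros l Hl. apply (Un_cv_abs_le _ _ _ Hs). intros N.
  eapply Rle_trans; [apply Rsum_abs|].
  eapply Rle_trans with (sum_f_R0 (fun k => (l * x k + y k / l) / 2) N).
  - apply sum_Rle. intros k _.
    pose proof (Rabs_pos (u k)). pose proof (Hx k). pose proof (Hy k).
    pose proof (Huxy k) as Hk. rewrite <- pow2_abs in Hk.
    assert (Hamgm : x k * y k <= ((l * x k + y k / l) / 2) ^ 2).
    { replace (((l * x k + y k / l) / 2) ^ 2)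
        with (x k * y k + ((l * x k - y k / l) / 2) ^ 2) by (field; lra).
      pose proof (pow2_ge_0 ((l * x k - y k / l) / 2)). lra. }
    assert (0 <= (l * x k + y k / l) / 2).
    { assert (0 <= y k / l) by (apply Rdiv_le_0_compat; lra). nra. }
    nra.
  - assert (Hlin : forall M, sum_f_R0 (fun k => (l * x k + y k / l) / 2) M
                             = (l * sum_f_R0 x M + sum_f_R0 y M / l) / 2).
    { induction M as [|M IH]; simpl; [|rewrite IH]; field; lra. }
    rewrite Hlin. pose proof (HX N). pose proof (HY N).
    assert (sum_f_R0 y N / l <= Y / l)
      by (apply Rmult_le_compat_r; [left; apply Rinv_0_lt_compat|]; lra).
    nra.
Qed.

Lemma Rpower_neg_le_diff (q x : R) : 1 < q -> 1 < x ->
  Rpower x (- q) <= (Rpower (x - 1) (1 - q) - Rpower x (1 - q)) / (q - 1).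
Proof.
  intros Hq Hx.
  destruct (MVT_cor2 (fun y => Rpower y (1 - q)) (fun y => (1 - q) * Rpower y (1 - q - 1))
              (x - 1) x) as [c [Hc Hcx]]; [lra| |].
  { intros c Hc. apply derivable_pt_lim_power. lra. }
  replace (1 - q - 1) with (- q) in Hc by ring.
  replace (x - (x - 1)) with 1 in Hc by ring.
  assert (Hmono : Rpower x (- q) <= Rpower c (- q)).
  { rewrite !Rpower_Ropp. apply Rinv_le_contravar; [unfold Rpower; apply exp_pos|].
    left. apply Rlt_Rpower_l; lra. }
  apply (Rmult_le_reg_l (q - 1)); [lra|].
  replace ((q - 1) * ((Rpower (x - 1) (1 - q) - Rpower x (1 - q)) / (q - 1)))
    with (- (Rpower x (1 - q) - Rpower (x - 1) (1 - q))) by (field; lra).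
  rewrite Hc. nra.
Qed.

Lemma sum_Rpower_tail_le (q : R) (n0 M : nat) : 1 < q -> (2 <= n0)%nat ->
  sum_f_R0 (fun k => Rpower (INR (n0 + k)) (- q)) M <= Rpower (INR n0 - 1) (1 - q) / (q - 1).
Proof.
  intros Hq Hn0.
  assert (Hn : 2 <= INR n0) by (apply (le_INR 2); exact Hn0).
  (* the bounds of [Rpower_neg_le_diff] telescope *)
  assert (Htel : forall M, sum_f_R0 (fun k => Rpower (INR (n0 + k)) (- q)) M
       <= (Rpower (INR n0 - 1) (1 - q) - Rpower (INR (n0 + M)) (1 - q)) / (q - 1)).
  { induction M0 as [|M0 IH]; simpl.
    - rewrite Nat.add_0_r. apply Rpower_neg_le_diff; lra.
    - assert (Hstep := Rpower_neg_le_diff q (INR (n0 + S M0)) Hq).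
      rewrite Nat.add_succ_r, S_INR in *.
      replace (INR (n0 + M0) + 1 - 1) with (INR (n0 + M0)) in Hstep by ring.
      assert (Hpos : 1 < INR (n0 + M0) + 1) by (rewrite plus_INR; pose proof (pos_INR M0); lra).
      set (A := Rpower (INR n0 - 1) (1 - q)) in *.
      set (B := Rpower (INR (n0 + M0)) (1 - q)) in *.
      set (C := Rpower (INR (n0 + M0) + 1) (1 - q)) in *.
      replace ((A - C) / (q - 1)) with ((A - B) / (q - 1) + (B - C) / (q - 1)) by (field; lra).
      specialize (Hstep Hpos). lra. }
  eapply Rle_trans; [apply Htel|].
  unfold Rdiv. apply Rmult_le_compat_r; [left; apply Rinv_0_lt_compat; lra|].
  assert (0 < Rpower (INR (n0 + M)) (1 - q)) by (unfold Rpower; apply exp_pos). lra.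
Qed.

Lemma Rpower_pred_small (q eta : R) : 1 < q -> 0 < eta ->
  exists N : nat, forall n : nat, (N <= n)%nat -> Rpower (INR n - 1) (1 - q) <= eta.
Proof.
  intros Hq He.
  set (x0 := Rpower eta (/ (1 - q))).
  assert (Hx0 : 0 < x0) by (unfold x0, Rpower; apply exp_pos).
  assert (Hx0q : Rpower x0 (q - 1) = / eta).
  { unfold x0. rewrite Rpower_mult.
    replace (/ (1 - q) * (q - 1)) with (Ropp 1) by (field; lra).
    rewrite Rpower_Ropp, Rpower_1; lra. }
  destruct (INR_archimed 1 (x0 + 1)) as [N HN]; [lra|].
  exists N. intros n Hn. apply le_INR in Hn.
  replace (1 - q) with (- (q - 1)) by ring. rewrite Rpower_Ropp.
  rewrite <- (Rinv_inv eta), <- Hx0q.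
  apply Rinv_le_contravar; [unfold Rpower; apply exp_pos|].
  apply Rle_Rpower_l; lra.
Qed.

Lemma sum_Rpower_tail_small (q eta : R) : 1 < q -> 0 < eta ->
  exists N : nat, forall n0 M : nat, (N <= n0)%nat ->
    sum_f_R0 (fun k => Rpower (INR (n0 + k)) (- q)) M <= eta.
Proof.
  intros Hq He.
  destruct (Rpower_pred_small q (eta * (q - 1)) Hq) as [N HN]; [nra|].
  exists (Nat.max 2 N). intros n0 M Hn0.
  eapply Rle_trans; [apply sum_Rpower_tail_le; [exact Hq | lia]|].
  apply (Rmult_le_reg_r (q - 1)); [lra|].
  replace (Rpower (INR n0 - 1) (1 - q) / (q - 1) * (q - 1))
    with (Rpower (INR n0 - 1) (1 - q)) by (field; lra).
  apply HN. lia.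
Qed.

Lemma is_RInt_sin_exp (T c : R) : 0 < T ->
  is_RInt (fun t => sin (PI * t / T) * exp (c * t)) 0 T
    (PI * T * (exp (c * T) + 1) / (PI ^ 2 + c ^ 2 * T ^ 2)).
Proof.
  intros HT. pose proof PI_RGT_0 as HPI.
  assert (Hden : 0 < PI ^ 2 + c ^ 2 * T ^ 2) by nra.
  set (F := fun t => T * exp (c * t) * (c * T * sin (PI * t / T) - PI * cos (PI * t / T))
                     / (PI ^ 2 + c ^ 2 * T ^ 2)).
  replace (PI * T * (exp (c * T) + 1) / (PI ^ 2 + c ^ 2 * T ^ 2)) with (minus (F T) (F 0)).
  - apply (@is_RInt_derive R_CompleteNormedModule F).
    + intros x _. unfold F. auto_derive; [easy|]. unfold Rdiv. field. split; nra.
    + intros x _. apply (@ex_derive_continuous R_AbsRing R_NormedModule). auto_derive. easy.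
  - unfold minus, plus, opp, F; simpl.
    replace (PI * T / T) with PI by (field; lra).
    replace (PI * 0 / T) with 0 by (field; lra).
    rewrite sin_PI, cos_PI, sin_0, cos_0, !Rmult_0_r, exp_0. field. nra.
Qed.

Lemma kern_sq_integral_le (T chi K : R) (S : R -> R) :
  0 < T -> continuity S ->
  (forall t, 0 <= t <= T -> S t ^ 2 <= K * exp (chi * t)) ->
  exists pr : Riemann_integrable (fun t => kern T t * S t ^ 2) 0 T,
    RiemannInt pr <= K * (PI * T * (exp (chi * T) + 1) / (PI ^ 2 + chi ^ 2 * T ^ 2)).
Proof.
  intros HT HS Hbound.
  assert (Hsin : forall x, continuity_pt (fun t => sin (PI * t / T)) x).
  { intros x. apply continuity_pt_filterlim.
    change (continuous (fun t => sin (PI * t / T)) x).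
    apply (@ex_derive_continuous R_AbsRing R_NormedModule). auto_derive. lra. }
  assert (Hint : Riemann_integrable (fun t => sin (PI * t / T) * (S t * S t)) 0 T).
  { apply continuity_implies_RiemannInt; [lra|]. intros x _.
    apply continuity_pt_mult; [apply Hsin|]. apply continuity_pt_mult; apply HS. }
  assert (pr : Riemann_integrable (fun t => kern T t * S t ^ 2) 0 T).
  { refine (Riemann_integrable_ext _ _ _ _ _ Hint). intros x Hx.
    rewrite Rmin_left, Rmax_right in Hx by lra.
    unfold kern. destruct (Rle_dec 0 x), (Rle_dec x T); lra. }
  exists pr. rewrite <- RInt_Reals.
  pose proof (is_RInt_scal _ _ _ K _ (is_RInt_sin_exp T chi HT)) as Hg.
  eapply Rle_trans; [|right; exact (is_RInt_unique _ _ _ _ Hg)].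
  apply RInt_le; [lra | now apply ex_RInt_Reals_1 | eexists; exact Hg |].
  intros x Hx. unfold kern, scal; simpl; unfold mult; simpl.
  destruct (Rle_dec 0 x), (Rle_dec x T); try lra.
  assert (0 <= sin (PI * x / T)).
  { apply sin_ge_0.
    - apply Rdiv_le_0_compat; [pose proof PI_RGT_0; nra | lra].
    - apply (Rmult_le_reg_r T); [lra|]. field_simplify; [|lra]. pose proof PI_RGT_0; nra. }
  pose proof (Hbound x ltac:(lra)). nra.
Qed.

Section DampedExponentialSeries.

Variables (c rho alpha p : nat -> R) (chi T Z L : R).
Hypotheses (Hchi : chi < 0) (HT : 0 < T) (HZ : 0 < Z)
  (Hrho : forall k, 3 * chi / 2 < rho k < chi / 2)
  (Halpha : forall k, 0 <= alpha k) (Hp : forall k, 0 <= p k)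
  (HalphaL : forall N, sum_f_R0 alpha N <= L) (HpZ : forall N, sum_f_R0 p N <= Z)
  (Hc : forall k, c k ^ 2 <= p k * alpha k).

Lemma abs_coef_le (k : nat) : Rabs (c k) <= p k + alpha k.
Proof.
  pose proof (Hc k) as Hk. rewrite <- pow2_abs in Hk.
  pose proof (Rabs_pos (c k)). pose proof (Hp k). pose proof (Halpha k). nra.
Qed.

Lemma exp_series_CVN_R : CVN_R (fun k t => c k * exp (rho k * t)).
Proof.
  intros rad. set (E := exp (- (3 / 2) * chi * rad)).
  assert (HE : 0 < E) by apply exp_pos.
  destruct (nonneg_series_cv (fun k => Rabs (Rabs (c k) * E)) ((Z + L) * E)) as [l Hl].
  - intros k. apply Rabs_pos.
  - intros N. rewrite (sum_eq _ (fun k => Rabs (c k) * E))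
      by (intros k _; rewrite Rabs_pos_eq; [reflexivity | pose proof (Rabs_pos (c k)); nra]).
    rewrite <- scal_sum, Rmult_comm. apply Rmult_le_compat_r; [lra|].
    eapply Rle_trans; [apply sum_Rle; intros k _; apply abs_coef_le|].
    rewrite sum_plus. pose proof (HpZ N). pose proof (HalphaL N). lra.
  - exists (fun k => Rabs (c k) * E), l. split; [exact Hl|].
    intros k y Hy. unfold Boule in Hy. rewrite Rminus_0_r in Hy.
    rewrite Rabs_mult, (Rabs_pos_eq (exp _)) by (left; apply exp_pos).
    apply Rmult_le_compat_l; [apply Rabs_pos|]. apply exp_le_of_le.
    assert (Hrk : Rabs (rho k) <= - (3 / 2) * chi) by (pose proof (Hrho k); apply Rabs_le; lra).
    eapply Rle_trans; [apply Rle_abs|]. rewrite Rabs_mult.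
    apply Rmult_le_compat; [apply Rabs_pos | apply Rabs_pos | exact Hrk | lra].
Qed.

Lemma exp_series_sum : exists S : R -> R,
  continuity S /\ forall t, infinite_sum (fun k => c k * exp (rho k * t)) (S t).
Proof.
  set (cv := CVN_R_CVS _ exp_series_CVN_R).
  exists (SFL _ cv). split.
  - apply SFL_continuity; [exact exp_series_CVN_R|]. intros k. reg.
  - intros t. unfold SFL. destruct (cv t) as [s Hs]. exact Hs.
Qed.

Lemma damped_series_cv :
  exists B : R, infinite_sum (fun k => alpha k / (PI ^ 2 + T ^ 2 * rho k ^ 2)) B.
Proof.
  pose proof PI_RGT_0 as HPI.
  assert (Hw : forall k, PI ^ 2 <= PI ^ 2 + T ^ 2 * rho k ^ 2)
    by (intros k; pose proof (pow2_ge_0 (T * rho k)); nra).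
  assert (Hterm : forall k, 0 <= alpha k / (PI ^ 2 + T ^ 2 * rho k ^ 2) <= alpha k / PI ^ 2).
  { intros k. pose proof (Halpha k). pose proof (Hw k). split.
    - apply Rdiv_le_0_compat; nra.
    - apply Rmult_le_compat_l; [lra|]. apply Rinv_le_contravar; nra. }
  destruct (nonneg_series_cv (fun k => alpha k / (PI ^ 2 + T ^ 2 * rho k ^ 2)) (L / PI ^ 2))
    as [B HB]; [apply Hterm| |now exists B].
  intros N. eapply Rle_trans; [apply sum_Rle; intros k _; apply Hterm|].
  unfold Rdiv. rewrite <- scal_sum, Rmult_comm.
  apply Rmult_le_compat_r; [left; apply Rinv_0_lt_compat; nra | apply HalphaL].
Qed.

Lemma exp_series_sq_le (t s B : R) : 0 <= t ->
  infinite_sum (fun k => c k * exp (rho k * t)) s ->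
  infinite_sum (fun k => alpha k / (PI ^ 2 + T ^ 2 * rho k ^ 2)) B ->
  s ^ 2 <= Z * (PI ^ 2 + 9 / 4 * chi ^ 2 * T ^ 2) * B * exp (chi * t).
Proof.
  intros Ht Hs HB. pose proof PI_RGT_0 as HPI.
  set (w := fun k => PI ^ 2 + T ^ 2 * rho k ^ 2).
  set (W := PI ^ 2 + 9 / 4 * chi ^ 2 * T ^ 2).
  assert (Hw : forall k, 0 < w k <= W).
  { intros k. pose proof (Hrho k). pose proof (pow2_ge_0 T). unfold w, W.
    assert (rho k ^ 2 <= 9 / 4 * chi ^ 2) by nra. nra. }
  assert (Hexp : forall k, exp (rho k * t) ^ 2 <= exp (chi * t)).
  { intros k. replace (exp (rho k * t) ^ 2) with (exp (2 * rho k * t))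
      by (simpl; rewrite Rmult_1_r, <- exp_plus; f_equal; ring).
    apply exp_le_of_le. pose proof (Hrho k). nra. }
  replace (Z * W * B * exp (chi * t)) with (Z * W * exp (chi * t) * B) by ring.
  apply (infinite_sum_cauchy_schwarz _ (fun k => p k * exp (rho k * t) ^ 2 * w k)
           (fun k => alpha k / w k) _ _ _ Hs).
  - intros k. pose proof (Hp k). pose proof (Hw k). pose proof (pow2_ge_0 (exp (rho k * t))).
    apply Rmult_le_pos; nra.
  - intros k. pose proof (Halpha k). pose proof (Hw k). apply Rdiv_le_0_compat; lra.
  - intros k. pose proof (Hc k). pose proof (Hw k).
    replace (p k * exp (rho k * t) ^ 2 * w k * (alpha k / w k))
      with (p k * alpha k * exp (rho k * t) ^ 2) by (field; lra).
    rewrite Rpow_mult_distr. apply Rmult_le_compat_r; [apply pow2_ge_0|lra].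
  - intros N. eapply Rle_trans with (sum_f_R0 (fun k => p k * (W * exp (chi * t))) N).
    + apply sum_Rle. intros k _. rewrite Rmult_assoc. apply Rmult_le_compat_l; [apply Hp|].
      rewrite Rmult_comm. pose proof (Hw k). pose proof (pow2_ge_0 (exp (rho k * t))).
      apply Rmult_le_compat; [lra|lra|lra|apply Hexp].
    + rewrite <- scal_sum. pose proof (exp_pos (chi * t)). pose proof (Hw 0%nat).
      apply Rle_trans with (W * exp (chi * t) * Z); [|right; ring].
      apply Rmult_le_compat_l; [nra | apply HpZ].
  - intros N. apply sum_incr; [exact HB|]. intros k.
    pose proof (Halpha k). pose proof (Hw k). apply Rdiv_le_0_compat; lra.
  - pose proof (exp_pos (chi * t)). pose proof (Hw 0%nat). apply Rmult_lt_0_compat; [|lra]. nra.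
Qed.

Theorem exp_series_kern_le : exists (S : R -> R) (B : R),
  (forall t, 0 <= t <= T -> infinite_sum (fun k => c k * exp (rho k * t)) (S t)) /\
  infinite_sum (fun k => alpha k / (PI ^ 2 + T ^ 2 * rho k ^ 2)) B /\
  exists pr : Riemann_integrable (fun t => kern T t * S t ^ 2) 0 T,
    RiemannInt pr <= 9 / 2 * Z * PI * T * B.
Proof.
  destruct exp_series_sum as [S [HSc HS]].
  destruct damped_series_cv as [B HB].
  exists S, B. split; [intros t _; apply HS|]. split; [exact HB|].
  set (W := PI ^ 2 + 9 / 4 * chi ^ 2 * T ^ 2).
  destruct (kern_sq_integral_le T chi (Z * W * B) S HT HSc) as [pr Hpr].
  { intros t Ht. now apply exp_series_sq_le. }
  exists pr. eapply Rle_trans; [exact Hpr|].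
  pose proof PI_RGT_0 as HPI.
  assert (HB0 : 0 <= B).
  { apply Rle_trans with (sum_f_R0 (fun k => alpha k / (PI ^ 2 + T ^ 2 * rho k ^ 2)) 0).
    - simpl. apply Rdiv_le_0_compat; [apply Halpha|]. pose proof (pow2_ge_0 (T * rho 0%nat)). nra.
    - apply sum_incr; [exact HB|]. intros k. apply Rdiv_le_0_compat; [apply Halpha|].
      pose proof (pow2_ge_0 (T * rho k)). nra. }
  assert (HE : exp (chi * T) <= 1) by (rewrite <- exp_0; apply exp_le_of_le; nra).
  assert (Hden : 0 < PI ^ 2 + chi ^ 2 * T ^ 2) by (pose proof (pow2_ge_0 (chi * T)); nra).
  assert (Hratio : W / (PI ^ 2 + chi ^ 2 * T ^ 2) <= 9 / 4).
  { apply (Rmult_le_reg_r (PI ^ 2 + chi ^ 2 * T ^ 2)); [lra|].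
    unfold W. field_simplify; [|lra]. nra. }
  replace (Z * W * B * (PI * T * (exp (chi * T) + 1) / (PI ^ 2 + chi ^ 2 * T ^ 2)))
    with (Z * PI * T * B * ((exp (chi * T) + 1) * (W / (PI ^ 2 + chi ^ 2 * T ^ 2))))
    by (field; lra).
  replace (9 / 2 * Z * PI * T * B) with (Z * PI * T * B * (2 * (9 / 4))) by field.
  apply Rmult_le_compat_l; [apply Rmult_le_pos; [apply Rmult_le_pos; [apply Rmult_le_pos|]|]; lra|].
  assert (0 <= W / (PI ^ 2 + chi ^ 2 * T ^ 2))
    by (unfold W; apply Rdiv_le_0_compat; [nra | lra]).
  pose proof (exp_pos (chi * T)).
  apply Rmult_le_compat; lra.
Qed.

End DampedExponentialSeries.

Lemma acoef_nonneg (C D d : nat -> Cx) (n : nat) : 0 <= acoef C D d n.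
Proof.
  unfold acoef, Cmod2.
  pose proof (pow2_ge_0 (fst (C n))). pose proof (pow2_ge_0 (snd (C n))).
  pose proof (pow2_ge_0 (fst (Cmul (d n) (D n)))). pose proof (pow2_ge_0 (snd (Cmul (d n) (D n)))).
  lra.
Qed.

Lemma sq_le_of_abs_le_Rpower_sqrt (u m x nu a : R) : 0 <= a ->
  Rabs u <= m * Rpower x (- nu) * sqrt a -> u ^ 2 <= Rpower x (- (2 * nu)) * m ^ 2 * a.
Proof.
  intros Ha Hu. rewrite <- pow2_abs.
  replace (Rpower x (- (2 * nu)) * m ^ 2 * a) with ((m * Rpower x (- nu) * sqrt a) ^ 2).
  - pose proof (Rabs_pos u). apply pow_incr. lra.
  - replace (- (2 * nu)) with (- nu + - nu) by ring.
    rewrite Rpower_plus. rewrite <- (sqrt_sqrt a Ha) at 2. ring.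
Qed.

Theorem lemma5p8 :
  forall (r : nat -> R) (chi mu nu : R) (n' : nat),
    chi < 0 -> Un_cv r chi -> 0 < mu -> / 2 < nu ->
    forall eps : R, 0 < eps < 1 ->
    exists n0 : nat,
      forall T : R, 0 < T ->
      forall (Rc : nat -> R) (C D d : nat -> Cx),
        (exists L : R, infinite_sum (acoef C D d) L) ->
        (forall n : nat, (n' <= n)%nat -> (0 < n)%nat ->
           Rabs (Rc n) <= mu * Rpower (INR n) (- nu) * sqrt (acoef C D d n)) ->
        exists (S : R -> R) (B : R),
          (forall t : R, 0 <= t <= T ->
             infinite_sum (fun m => Rc (n0 + m)%nat * exp (r (n0 + m)%nat * t)) (S t)) /\
          infinite_sum (fun m => acoef C D d (n0 + m)%nat
                                 / (PI ^ 2 + T ^ 2 * (r (n0 + m)%nat) ^ 2)) B /\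
          exists pr : Riemann_integrable (fun t => kern T t * (S t) ^ 2) 0 T,
            RiemannInt pr <= eps * PI * T * B.
Proof.
  intros r chi mu nu n' Hchi Hr Hmu Hnu eps Heps.
  set (eta := 2 * eps / (9 * mu ^ 2)).
  assert (Heta : 0 < eta) by (apply Rdiv_lt_0_compat; nra).
  destruct (sum_Rpower_tail_small (2 * nu) eta) as [Np HNp]; [lra | exact Heta |].
  destruct (Hr (- chi / 2)) as [Nr HNr]; [lra|].
  exists (Nat.max Nr (Nat.max n' (Nat.max 1 Np))).
  set (n0 := Nat.max Nr (Nat.max n' (Nat.max 1 Np))).
  intros T HT Rc C D d [L HL] Hbd.
  destruct (exp_series_kern_le (fun k => Rc (n0 + k)%nat) (fun k => r (n0 + k)%nat)
              (fun k => acoef C D d (n0 + k)%nat)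
              (fun k => Rpower (INR (n0 + k)) (- (2 * nu)) * mu ^ 2) chi T (mu ^ 2 * eta) L)
    as (S & B & HS & HB & pr & Hpr).
  - exact Hchi.
  - exact HT.
  - apply Rmult_lt_0_compat; [nra | exact Heta].
  - intros k. specialize (HNr (n0 + k)%nat ltac:(lia)).
    unfold R_dist in HNr. apply Rabs_def2 in HNr. lra.
  - intros k. apply acoef_nonneg.
  - intros k. apply Rmult_le_pos; [left; apply exp_pos | apply pow2_ge_0].
  - intros N. apply infinite_sum_tail_le; [exact HL | apply acoef_nonneg].
  - intros N. rewrite <- scal_sum.
    apply Rmult_le_compat_l; [apply pow2_ge_0 | apply HNp; lia].
  - intros k. apply sq_le_of_abs_le_Rpower_sqrt; [apply acoef_nonneg | apply Hbd; lia].
  - exists S, B. split; [exact HS|]. split; [exact HB|]. exists pr.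
    replace (eps * PI * T * B) with (9 / 2 * (mu ^ 2 * eta) * PI * T * B)
      by (unfold eta; field; lra).
    exact Hpr.
Qed.
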